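(* Fix $b\in\{0,1,\dots,|\mathbf d|\}$. Then on $\mathcal M^\bullet$, for all $r,s\in\mathbb Z_m$: $\{(\Phi^{(b)}_s)_{ij},(X_r)_{kl}\}=\tfrac12\delta_{r+1,s}\big((X_r)_{kj}(\Phi^{(b)}_s)_{il}+(X_r\Phi^{(b)}_s)_{kj}\delta_{il}\big)-\tfrac12\delta_{rs}\big(\delta_{kj}(\Phi^{(b)}_sX_r)_{il}+(\Phi^{(b)}_s)_{kj}(X_r)_{il}\big)$, $\{(\Phi^{(b)}_s)_{ij},(Y_r)_{kl}\}=\tfrac12\delta_{rs}\big((Y_r)_{kj}(\Phi^{(b)}_s)_{il}+(Y_r\Phi^{(b)}_s)_{kj}\delta_{il}\big)-\tfrac12\delta_{r+1,s}\big(\delta_{kj}(\Phi^{(b)}_sY_r)_{il}+(\Phi^{(b)}_s)_{kj}(Y_r)_{il}\big)$; for all $s\in\mathbb Z_m$ and all spin indices $(r,\beta)\le\rho(b)$: $\{(\Phi^{(b)}_s)_{ij},(V_{r,\beta})_l\}=\tfrac12\delta_{rs}\big((V_{r,\beta})_j(\Phi^{(b)}_s)_{il}+(V_{r,\beta}\Phi^{(b)}_s)_j\delta_{il}\big)$, $\{(\Phi^{(b)}_s)_{ij},(W_{r,\beta})_k\}=-\tfrac12\delta_{rs}\big(\delta_{kj}(\Phi^{(b)}_sW_{r,\beta})_i+(\Phi^{(b)}_s)_{kj}(W_{r,\beta})_i\big)$; and for every $c\in\{0,\dots,|\mathbf d|\}$ with $c<b$ and all $r,s\in\mathbb Z_m$: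 $\{(\Phi^{(b)}_s)_{ij},(\Phi^{(c)}_r)_{kl}\}=\tfrac12\delta_{rs}\big((\Phi^{(c)}_r)_{kj}(\Phi^{(b)}_s)_{il}+(\Phi^{(c)}_r\Phi^{(b)}_s)_{kj}\delta_{il}\big)-\tfrac12\delta_{rs}\big(\delta_{kj}(\Phi^{(b)}_s\Phi^{(c)}_r)_{il}+(\Phi^{(b)}_s)_{kj}(\Phi^{(c)}_r)_{il}\big)$.
   Context: Fix integers $m\ge2$, $n\ge1$ and $\mathbf d=(d_0,\dots,d_{m-1})\in\mathbb N^m$ with $d_0\ge1$; $|\mathbf d|=\sum_sd_s$. Indices $r,s$ range over $\mathbb Z_m$, identified with $\{0,\dots,m-1\}$ with its usual order; Kronecker deltas of such indices are taken modulo $m$. A spin index is a pair $(s,\alpha)$ with $s\in\mathbb Z_m$, $1\le\alpha\le d_s$; spin indices are totally ordered by $(s,\alpha)<(r,\beta)$ iff $s<r$, or $s=r$ and $\alpha<\beta$. Let $\rho:\{1,\dots,|\mathbf d|\}\to\{\text{spin indices}\}$ be the unique order-preserving bijection; by convention no spin index satisfies $(s,\alpha)\le\rho(0)$. $\mathcal M^\bullet$ is the smooth affine variety of tuples $(X_s,Y_s,V_{s,\alpha},W_{s,\alpha})$, $X_s,Y_s\in\mathrm{Mat}(n\times n,\mathbb C)$, $V_{s,\alpha}\in\mathrm{Mat}(1\times n,\mathbb C)$, $W_{s,\alpha}\in\mathrm{Mat}(n\times1,\mathbb C)$, with $\mathrm{Id}_n+X_sY_s$, $\mathrm{Id}_n+Y_sX_s$,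 $\mathrm{Id}_n+W_{s,\alpha}V_{s,\alpha}$ invertible and $1+V_{s,\alpha}W_{s,\alpha}\ne0$. For $b\in\{0,\dots,|\mathbf d|\}$ and $s\in\mathbb Z_m$ define the matrix-valued function $\Phi^{(b)}_s=(\mathrm{Id}_n+X_sY_s)(\mathrm{Id}_n+Y_{s-1}X_{s-1})^{-1}\prod_{\alpha:\,(s,\alpha)\le\rho(b)}^{\rightarrow}(\mathrm{Id}_n+W_{s,\alpha}V_{s,\alpha})^{-1}$, the product taken over increasing $\alpha$ from left to right (empty product $=\mathrm{Id}_n$). The quasi-Poisson bracket $\{-,-\}$ on $\mathcal M^\bullet$ is the antisymmetric biderivation given on entry functions by ($o(s,r)=\operatorname{sgn}(r-s)$ computed in $\{0,\dots,m-1\}$, $o(\alpha,\beta)=\operatorname{sgn}(\beta-\alpha)$): $\{(X_r)_{ij},(X_s)_{kl}\}=\tfrac12\delta_{s,r-1}(X_{r-1}X_r)_{kj}\delta_{il}-\tfrac12\delta_{s,r+1}\delta_{kj}(X_rX_{r+1})_{il}$; $\{(Y_r)_{ij},(Y_s)_{kl}\}=\tfrac12\delta_{s,r-1}\delta_{kj}(Y_rY_{r-1})_{il}-\tfrac12\delta_{s,r+1}(Y_{r+1}Y_r)_{kj}\delta_{il}$; $\{(X_r)_{ij},(Y_s)_{kl}\}=\delta_{sr}\big(\delta_{kj}\delta_{il}+\tfrac12(Y_rX_r)_{kj}\delta_{il}+\tfrac12\delta_{kj}(X_rY_r)_{il}\big)-\tfrac12\delta_{s,r-1}(X_r)_{kj}(Y_{r-1})_{il}+\tfrac12\delta_{s,r+1}(Y_{r+1})_{kj}(X_r)_{il}$;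 $\{(X_r)_{ij},(W_{s,\alpha})_k\}=\tfrac12\delta_{s,r+1}\delta_{kj}(X_rW_{r+1,\alpha})_i-\tfrac12\delta_{rs}(X_r)_{kj}(W_{r,\alpha})_i$; $\{(X_r)_{ij},(V_{s,\alpha})_l\}=\tfrac12\delta_{rs}(V_{r,\alpha}X_r)_j\delta_{il}-\tfrac12\delta_{s,r+1}(V_{r+1,\alpha})_j(X_r)_{il}$; $\{(Y_r)_{ij},(W_{s,\alpha})_k\}=\tfrac12\delta_{rs}\delta_{kj}(Y_rW_{r,\alpha})_i-\tfrac12\delta_{s,r+1}(Y_r)_{kj}(W_{r+1,\alpha})_i$; $\{(Y_r)_{ij},(V_{s,\alpha})_l\}=\tfrac12\delta_{s,r+1}(V_{r+1,\alpha}Y_r)_j\delta_{il}-\tfrac12\delta_{rs}(V_{r,\alpha})_j(Y_r)_{il}$; $\{(V_{s,\alpha})_j,(V_{r,\beta})_l\}=-\tfrac12o(s,r)(V_{s,\alpha})_j(V_{r,\beta})_l-\tfrac12\delta_{sr}o(\alpha,\beta)\big((V_{r,\beta})_j(V_{s,\alpha})_l+(V_{s,\alpha})_j(V_{r,\beta})_l\big)$; $\{(W_{s,\alpha})_i,(W_{r,\beta})_k\}=-\tfrac12o(s,r)(W_{r,\beta})_k(W_{s,\alpha})_i-\tfrac12\delta_{sr}o(\alpha,\beta)\big((W_{r,\beta})_k(W_{s,\alpha})_i+(W_{s,\alpha})_k(W_{r,\beta})_i\big)$; $\{(V_{s,\alpha})_j,(W_{r,\beta})_k\}=\tfrac12o(s,r)(W_{r,\beta})_k(V_{s,\alpha})_j+\delta_{sr}\delta_{\alpha\beta}\big(\delta_{kj}+\tfrac12(W_{r,\beta})_k(V_{s,\alpha})_j+\tfrac12\delta_{kj}V_{s,\alpha}W_{r,\beta}\big)+\tfrac12\delta_{sr}o(\alpha,\beta)\big(\delta_{kj}V_{s,\alpha}W_{r,\beta}+(W_{r,\beta})_k(V_{s,\alpha})_j\big)$.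 *)

From HB Require Import structures.
From mathcomp Require Import all_boot all_order all_algebra.
Set Implicit Arguments. Unset Strict Implicit. Unset Printing Implicit Defensive.
Import Order.TTheory GRing.Theory Num.Theory.
Local Open Scope ring_scope.

(* Z_m is modelled by 'I_m; r+1 and r-1 mod m are ordS / ord_pred. *)
Notation zsucc := (@ordS _).
Notation zpred := (@ord_pred _).

Section Defs.
Variable A : comUnitRingType.

Definition dl (b : bool) : A := (b : nat)%:R.
Definition halfA : A := (2%:R)^-1.
Definition osgn (x y : nat) : A :=
  if (x < y)%N then 1 else if (y < x)%N then -1 else 0.

Variables (m n : nat) (d : 'I_m -> nat).

Definition dsum : nat := (\sum_(t < m) d t)%N.

(* Spin indices (s, alpha) with alpha : 'I_(d s) the 0-based version of the
   paper's 1 <= alpha <= d_s.  rho is the order-preserving bijection onto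
   {1,..,|d|}; its inverse sends (s,alpha) to spin_pos s alpha.  Hence
   (s,alpha) <= rho(b)  iff  spin_pos s alpha <= b  (for b = 0 nothing). *)
Definition spin_pos (s : 'I_m) (a : 'I_(d s)) : nat :=
  ((\sum_(t < m | (t < s)%N) d t) + a + 1)%N.
Definition spin_le_rho (s : 'I_m) (a : 'I_(d s)) (b : nat) : bool :=
  (spin_pos a <= b)%N.

Variables (X Y : 'I_m -> 'M[A]_n)
          (V : forall s : 'I_m, 'I_(d s) -> 'rV[A]_n)
          (W : forall s : 'I_m, 'I_(d s) -> 'cV[A]_n).

Definition Phi (b : nat) (s : 'I_m) : 'M[A]_n :=
  (1%:M + X s *m Y s) *m invmx (1%:M + Y (zpred s) *m X (zpred s)) *m
  \big[mulmx/1%:M]_(a < d s | spin_le_rho a b) invmx (1%:M + W a *m V a).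

Definition in_Mbullet : Prop :=
  (forall s, (1%:M + X s *m Y s) \in unitmx) /\
  (forall s, (1%:M + Y s *m X s) \in unitmx) /\
  (forall s (a : 'I_(d s)), (1%:M + W a *m V a) \in unitmx) /\
  (forall s (a : 'I_(d s)), (1 + (V a *m W a) 0 0) \is a GRing.unit).

Definition antisym_biderivation (br : A -> A -> A) : Prop :=
  (forall f g, br f g = - br g f) /\
  (forall f g h, br (f + g) h = br f h + br g h) /\
  (forall f g h, br (f * g) h = f * br g h + br f h * g).

Definition qP_brackets (br : A -> A -> A) : Prop :=
  (forall r s i j k l,
     br (X r i j) (X s k l) =
       halfA * dl (s == zpred r) * (X (zpred r) *m X r) k j * dl (i == l)
     - halfA * dl (s == zsucc r) * dl (k == j) * (X r *m X (zsucc r)) i l) /\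
  (forall r s i j k l,
     br (Y r i j) (Y s k l) =
       halfA * dl (s == zpred r) * dl (k == j) * (Y r *m Y (zpred r)) i l
     - halfA * dl (s == zsucc r) * (Y (zsucc r) *m Y r) k j * dl (i == l)) /\
  (forall r s i j k l,
     br (X r i j) (Y s k l) =
       dl (s == r) * (dl (k == j) * dl (i == l)
                      + halfA * (Y r *m X r) k j * dl (i == l)
                      + halfA * dl (k == j) * (X r *m Y r) i l)
     - halfA * dl (s == zpred r) * X r k j * Y (zpred r) i l
     + halfA * dl (s == zsucc r) * Y (zsucc r) k j * X r i l) /\
  (forall r s (a : 'I_(d s)) i j k,
     br (X r i j) (W a k 0) =
       halfA * dl (s == zsucc r) * dl (k == j) * (X r *m W a) i 0
     - halfA * dl (r == s) * X r k j * W a i 0) /\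
  (forall r s (a : 'I_(d s)) i j l,
     br (X r i j) (V a 0 l) =
       halfA * dl (r == s) * (V a *m X r) 0 j * dl (i == l)
     - halfA * dl (s == zsucc r) * V a 0 j * X r i l) /\
  (forall r s (a : 'I_(d s)) i j k,
     br (Y r i j) (W a k 0) =
       halfA * dl (r == s) * dl (k == j) * (Y r *m W a) i 0
     - halfA * dl (s == zsucc r) * Y r k j * W a i 0) /\
  (forall r s (a : 'I_(d s)) i j l,
     br (Y r i j) (V a 0 l) =
       halfA * dl (s == zsucc r) * (V a *m Y r) 0 j * dl (i == l)
     - halfA * dl (r == s) * V a 0 j * Y r i l) /\
  (forall s r (a : 'I_(d s)) (c : 'I_(d r)) j l,
     br (V a 0 j) (V c 0 l) =
     - halfA * osgn s r * V a 0 j * V c 0 l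
     - halfA * dl (s == r) * osgn a c * (V c 0 j * V a 0 l + V a 0 j * V c 0 l)) /\
  (forall s r (a : 'I_(d s)) (c : 'I_(d r)) i k,
     br (W a i 0) (W c k 0) =
     - halfA * osgn s r * W c k 0 * W a i 0
     - halfA * dl (s == r) * osgn a c * (W c k 0 * W a i 0 + W a k 0 * W c i 0)) /\
  (forall s r (a : 'I_(d s)) (c : 'I_(d r)) j k,
     br (V a 0 j) (W c k 0) =
       halfA * osgn s r * W c k 0 * V a 0 j
     + dl (s == r) * dl (nat_of_ord a == nat_of_ord c) *
         (dl (k == j) + halfA * W c k 0 * V a 0 j
          + halfA * dl (k == j) * (V a *m W c) 0 0)
     + halfA * dl (s == r) * osgn a c *
         (dl (k == j) * (V a *m W c) 0 0 + W c k 0 * V a 0 j)).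

End Defs.
Arguments dl {A} b.
Arguments halfA {A}.
Arguments osgn {A} x y.

From HB Require Import structures.
From mathcomp Require Import all_boot all_order all_algebra.
From mathcomp Require Import ring.
Import Order.TTheory GRing.Theory Num.Theory.
Local Open Scope ring_scope.
Set Implicit Arguments. Unset Strict Implicit. Unset Printing Implicit Defensive.

(* For n x n matrices F and G we say that
   {F, G} has standard shape with coefficients (a, a', b, b') when
     {F_ij, G_kl} = 1/2 (a G_kj F_il + a' (GF)_kj d_il - b d_kj (FG)_il - b' F_kj G_il).
   The first section develops a small calculus for an arbitrary antisymmetric
   biderivation: by the Leibniz rule, the standard shape is preserved by matrix
   products in the first slot (the coefficients compose when the inner ones
   cancel), by inverses, by adding the identity, and by exchanging F and G.
   The second section applies it to the quasi-Poisson bracket: the brackets of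
   the generators (V and W padded into n x n matrices) give the standard shape
   for the factors 1 + X_s Y_s, (1 + Y_(s-1) X_(s-1))^-1, (1 + W V)^-1 of
   Phi^(b)_s, hence for Phi^(b)_s itself with X_r, Y_r, V_(r,c), W_(r,c);
   antisymmetry then gives the shape of {Phi^(c)_r, Phi^(b)_s} factor by factor. *)

Section BracketCalculus.
Variables (A : comUnitRingType) (n : nat) (br : A -> A -> A).
Hypothesis hbr : antisym_biderivation br.

Lemma br_antisym f g : br f g = - br g f.
Proof. by case: hbr. Qed.

Lemma br_addl f g h : br (f + g) h = br f h + br g h.
Proof. by case: hbr => _ []. Qed.

Lemma br_mull f g h : br (f * g) h = f * br g h + br f h * g.
Proof. by case: hbr => _ []. Qed.

Lemma br0l h : br 0 h = 0.
Proof. by apply: (@addrI _ (br 0 h)); rewrite -br_addl !addr0. Qed.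

Lemma br0r h : br h 0 = 0.
Proof. by rewrite br_antisym br0l oppr0. Qed.

Lemma br_natl k h : br k%:R h = 0.
Proof.
have br1 : br 1 h = 0.
  have := br_mull 1 1 h; rewrite !mul1r mulr1 => E.
  by apply: (@addrI _ (br 1 h)); rewrite addr0 -E.
by elim: k => [|k IHk]; rewrite ?br0l // mulrS br_addl br1 IHk addr0.
Qed.

Lemma br_suml I (r : seq I) (P : pred I) (F : I -> A) h :
  br (\sum_(i <- r | P i) F i) h = \sum_(i <- r | P i) br (F i) h.
Proof. exact: (big_morph (br^~ h) (fun f g => br_addl f g h) (br0l h)). Qed.

Definition tensor := 'I_n -> 'I_n -> 'I_n -> 'I_n -> A.

Definition brackets (F G : 'M[A]_n) (T : tensor) : Prop :=
  forall i j k l, br (F i j) (G k l) = T i j k l.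

(* All tensors met below are sums of terms c P_kj Q_il; the triple (c, P, Q)
   encodes one such term. *)
Definition term := (A * 'M[A]_n * 'M[A]_n)%type.

Definition tensor_of (L : seq term) : tensor :=
  fun i j k l => \sum_(x <- L) x.1.1 * (x.1.2 k j * x.2 i l).

Definition lmul_terms (F : 'M[A]_n) (L : seq term) : seq term :=
  [seq (x.1.1, x.1.2, F *m x.2) | x <- L].

Definition rmul_terms (L : seq term) (F : 'M[A]_n) : seq term :=
  [seq (x.1.1, x.1.2 *m F, x.2) | x <- L].

Lemma brackets_ext F G T T' :
  brackets F G T -> (forall i j k l, T i j k l = T' i j k l) -> brackets F G T'.
Proof. by move=> FG E i j k l; rewrite FG E. Qed.

Lemma brackets_mulmx F1 F2 G T1 T2 : brackets F1 G T1 -> brackets F2 G T2 ->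
  brackets (F1 *m F2) G
    (fun i j k l => \sum_p (F1 i p * T2 p j k l + T1 i p k l * F2 p j)).
Proof.
move=> F1G F2G i j k l; rewrite mxE br_suml; apply: eq_bigr => p _.
by rewrite br_mull F1G F2G.
Qed.

Lemma tensor_of_lmul (F : 'M[A]_n) L i j k l :
  \sum_p F i p * tensor_of L p j k l = tensor_of (lmul_terms F L) i j k l.
Proof.
rewrite /tensor_of big_map.
under [LHS]eq_bigr do rewrite big_distrr.
rewrite exchange_big /=; apply: eq_bigr => x _; rewrite mxE !big_distrr.
by apply: eq_bigr => p _ /=; ring.
Qed.

Lemma tensor_of_rmul (F : 'M[A]_n) L i j k l :
  \sum_p tensor_of L i p k l * F p j = tensor_of (rmul_terms L F) i j k l.
Proof.
rewrite /tensor_of big_map.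
under [LHS]eq_bigr do rewrite big_distrl.
rewrite exchange_big /=; apply: eq_bigr => x _; rewrite mxE big_distrl /= !big_distrr.
by apply: eq_bigr => p _ /=; ring.
Qed.

Lemma tensor_of_cat L1 L2 i j k l :
  tensor_of (L1 ++ L2) i j k l = tensor_of L1 i j k l + tensor_of L2 i j k l.
Proof. by rewrite /tensor_of big_cat. Qed.

Lemma brackets_mul F1 F2 G L1 L2 :
  brackets F1 G (tensor_of L1) -> brackets F2 G (tensor_of L2) ->
  brackets (F1 *m F2) G (tensor_of (lmul_terms F1 L2 ++ rmul_terms L1 F2)).
Proof.
move=> F1G F2G; apply: (brackets_ext (brackets_mulmx F1G F2G)) => i j k l.
by rewrite big_split /= tensor_of_lmul tensor_of_rmul tensor_of_cat.
Qed.

(* The entries of the identity matrix are constants, hence Casimirs. *)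
Lemma brackets_1add F G T : brackets F G T -> brackets (1%:M + F) G T.
Proof.
by move=> FG i j k l; rewrite [X in br X _]mxE br_addl mxE br_natl add0r FG.
Qed.

Definition std_terms (a a' b b' : A) (F G : 'M[A]_n) : seq term :=
  [:: (halfA * a, G, F); (halfA * a', G *m F, 1%:M);
      (- (halfA * b), 1%:M, F *m G); (- (halfA * b'), F, G)].

Definition std (a a' b b' : A) (F G : 'M[A]_n) : tensor :=
  tensor_of (std_terms a a' b b' F G).

Lemma std_entry a a' b b' F G i j k l :
  std a a' b b' F G i j k l =
    halfA * a * (G k j * F i l) + halfA * a' * ((G *m F) k j * dl (i == l))
  - halfA * b * (dl (k == j) * (F *m G) i l) - halfA * b' * (F k j * G i l).
Proof. by rewrite /std /tensor_of !big_cons big_nil /= !mxE; ring. Qed.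

Lemma id_entry i j : (1%:M : 'M[A]_n) i j = dl (i == j).
Proof. by rewrite mxE. Qed.

Lemma addmx_entry (P Q : 'M[A]_n) i j : (P + Q) i j = P i j + Q i j.
Proof. by rewrite mxE. Qed.

Lemma std_congr F G a a' b b' x x' y y' :
  brackets F G (std a a' b b' F G) ->
  a = x -> a' = x' -> b = y -> b' = y' -> brackets F G (std x x' y y' F G).
Proof. by move=> FG <- <- <- <-. Qed.

Lemma std_mul F1 F2 G a1 a1' b1 b1' a2 b2 :
  brackets F1 G (std a1 a1' b1 b1' F1 G) ->
  brackets F2 G (std a2 (- a1) b2 (- b1) F2 G) ->
  brackets (F1 *m F2) G (std a2 a1' b2 b1' (F1 *m F2) G).
Proof.
move=> F1G F2G; apply: (brackets_ext (brackets_mul F1G F2G)) => i j k l.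
rewrite /std /std_terms /tensor_of /lmul_terms /rmul_terms /=.
by rewrite !big_cons !big_nil /= !mulmxA !mulmx1 !mul1mx; ring.
Qed.

(* Inverses: obtained from the Leibniz rule applied to F F^-1 = 1. *)
Lemma std_inv F G a a' b b' : F \in unitmx ->
  brackets F G (std a a' b b' F G) ->
  brackets (invmx F) G (std (- a') (- a) (- b') (- b) (invmx F) G).
Proof.
move=> Funit FG.
pose Z : tensor := fun i j k l => br (invmx F i j) (G k l).
have ZG : brackets (invmx F) G Z by [].
have FZ i j k l : \sum_p F i p * Z p j k l =
    - tensor_of (rmul_terms (std_terms a a' b b' F G) (invmx F)) i j k l.
  (* the entries of F F^-1 = 1 are constants *)
  have := brackets_mulmx FG ZG i j k l.
  rewrite mulmxV // mxE br_natl big_split /= tensor_of_rmul => /esym /eqP.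
  by rewrite addr_eq0 => /eqP.
(* Multiplying by F^-1 on the left recovers the brackets of F^-1 itself. *)
move=> p j k l; rewrite -/(Z p j k l).
have -> : Z p j k l = \sum_i invmx F p i * \sum_q F i q * Z q j k l.
  have -> : Z p j k l = \sum_q (invmx F *m F) p q * Z q j k l.
    rewrite mulVmx // (bigD1 p) //= mxE eqxx mul1r big1 ?addr0 // => q /negbTE qp.
    by rewrite mxE eq_sym qp mul0r.
  under eq_bigr do rewrite mxE big_distrl.
  rewrite exchange_big; apply: eq_bigr => i _; rewrite big_distrr.
  by apply: eq_bigr => q _; exact: esym (mulrA _ _ _).
under eq_bigr do rewrite FZ mulrN.
rewrite sumrN tensor_of_lmul /std /std_terms /tensor_of /lmul_terms /rmul_terms /=.
rewrite !big_cons !big_nil /= !mulmxA !mulmx1 !mul1mx !mulVmx // !mulmxV //.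
by rewrite !mulmxK // !mul1mx ?id_entry; ring.
Qed.

Lemma std_1add F G a b :
  brackets F G (std a (- a) b (- b) F G) ->
  brackets (1%:M + F) G (std a (- a) b (- b) (1%:M + F) G).
Proof.
move=> FG; apply: (brackets_ext (brackets_1add FG)) => i j k l.
by rewrite !std_entry !mulmxDl !mulmxDr !mulmx1 !mul1mx !mxE; ring.
Qed.

Lemma std_id G a b : brackets 1%:M G (std a (- a) b (- b) 1%:M G).
Proof.
by move=> i j k l; rewrite mxE br_natl std_entry !mulmx1 !mul1mx !id_entry; ring.
Qed.

Lemma std_swap F G a a' b b' :
  brackets F G (std a a' b b' F G) -> brackets G F (std (- a) b a' (- b') G F).
Proof. by move=> FG i j k l; rewrite br_antisym FG !std_entry; ring. Qed.

HB.instance Definition _ := Monoid.isLaw.Build ('M[A]_n) 1%:M mulmx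
  (@mulmxA A n n n n) (@mul1mx A n n) (@mulmx1 A n n).

Lemma std_chain N F0 (g : 'I_N -> 'M[A]_n) G (alpha beta : nat -> A) a' b' :
  brackets F0 G (std (alpha 0) a' (beta 0) b' F0 G) ->
  (forall t : 'I_N, brackets (g t) G
     (std (alpha t.+1) (- alpha t) (beta t.+1) (- beta t) (g t) G)) ->
  brackets (F0 *m \big[mulmx/1%:M]_(t < N) g t) G
    (std (alpha N) a' (beta N) b' (F0 *m \big[mulmx/1%:M]_(t < N) g t) G).
Proof.
move=> F0G; elim: N g => [|N IHN] g gG; first by rewrite big_ord0 mulmx1.
rewrite big_ord_recr /= mulmxA.
exact: std_mul (IHN _ (fun t => gG (widen_ord (leqnSn N) t))) (gG ord_max).
Qed.

End BracketCalculus.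

Ltac expand_terms := rewrite /std /std_terms /tensor_of /lmul_terms /rmul_terms
  /= !big_cons !big_nil /= ?id_entry.

(* We take n = n'.+1 so that row and
   column 0 exist; D_unit and E_unit are the invertibility conditions of
   M^bullet used to invert the factors of Phi, and 2 is invertible so that the
   halves in the bracket make sense. *)
Section Model.
Variables (A : comUnitRingType) (m n' : nat).
Local Notation n := n'.+1.
Variables (d : 'I_m -> nat) (X Y : 'I_m -> 'M[A]_n)
          (V : forall s : 'I_m, 'I_(d s) -> 'rV[A]_n)
          (W : forall s : 'I_m, 'I_(d s) -> 'cV[A]_n)
          (br : A -> A -> A).
Hypothesis two_unit : (2%:R : A) \is a GRing.unit.
Hypothesis hbr : antisym_biderivation br.
Hypothesis hgen : qP_brackets X Y V W br.
Hypothesis D_unit : forall p, (1%:M + Y p *m X p) \in unitmx.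
Hypothesis E_unit : forall s (a : 'I_(d s)), (1%:M + W a *m V a) \in unitmx.

Local Notation h := (halfA : A).
Local Notation brackets := (brackets br).

(* 1 = 1/2 + 1/2: splits the unhalved terms of {X, Y} and {V, W}. *)
Lemma half_twice (x : A) : x = h * x + h * x.
Proof. by rewrite -mulrDl -mulr2n -mulr_natr mulVr ?mul1r. Qed.

Lemma dl_true : dl true = 1 :> A. Proof. by []. Qed.
Lemma dl_false : dl false = 0 :> A. Proof. by []. Qed.

Lemma eq_zpred (r s : 'I_m) : (s == zpred r) = (r == zsucc s).
Proof. by apply/eqP/eqP => [->|->]; [rewrite ord_predK | rewrite ordSK]. Qed.

Lemma eq_zsucc (r s : 'I_m) : (s == zsucc r) = (r == zpred s).
Proof. by apply/eqP/eqP => [->|->]; [rewrite ordSK | rewrite ord_predK]. Qed.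

Lemma dl_subst (x y : 'I_m) (f : 'I_m -> A) :
  dl (x == y) * f y = dl (x == y) * f x.
Proof. by case: eqVneq => [->|_]; rewrite ?dl_false ?mul0r. Qed.

(* To treat V and W on the same footing as X and Y, the row V_(s,a) is padded
   into the n x n matrix whose row 0 is V_(s,a), and the column W_(s,a) into the
   one whose column 0 is W_(s,a); e00 is the matrix unit at (0,0). *)
Definition Vp s (a : 'I_(d s)) : 'M[A]_n :=
  \matrix_(i, j) (if i == ord0 then V a 0 j else 0).
Definition Wp s (a : 'I_(d s)) : 'M[A]_n :=
  \matrix_(i, j) (if j == ord0 then W a i 0 else 0).
Definition e00 : 'M[A]_n :=
  \matrix_(i, j) (if (i == ord0) && (j == ord0) then 1 else 0).

Lemma Vp_entry s (a : 'I_(d s)) i j : Vp a i j = if i == ord0 then V a 0 j else 0.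
Proof. by rewrite mxE. Qed.

Lemma Wp_entry s (a : 'I_(d s)) i j : Wp a i j = if j == ord0 then W a i 0 else 0.
Proof. by rewrite mxE. Qed.

Lemma e00_entry i j : e00 i j = if (i == ord0) && (j == ord0) then 1 else 0.
Proof. by rewrite mxE. Qed.

Lemma Vp_mul_entry p s (a : 'I_(d s)) (M : 'M[A]_(n, p)) i j :
  (Vp a *m M) i j = if i == ord0 then (V a *m M) 0 j else 0.
Proof.
rewrite mxE; case: (eqVneq i ord0) => [->|/negbTE ni].
  by rewrite mxE; apply: eq_bigr => k _; rewrite mxE.
by rewrite big1 // => k _; rewrite mxE ni mul0r.
Qed.

Lemma mul_Wp_entry p s (a : 'I_(d s)) (M : 'M[A]_(p, n)) i j :
  (M *m Wp a) i j = if j == ord0 then (M *m W a) i 0 else 0.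
Proof.
rewrite mxE; case: (eqVneq j ord0) => [->|/negbTE nj].
  by rewrite mxE; apply: eq_bigr => k _; rewrite mxE.
by rewrite big1 // => k _; rewrite mxE nj mulr0.
Qed.

Lemma sum_ord0 (f : 'I_n -> A) : (forall k, k != ord0 -> f k = 0) -> \sum_k f k = f ord0.
Proof. by move=> f0; rewrite (bigD1 ord0) //= big1 ?addr0. Qed.

Lemma WpVp s r (a : 'I_(d s)) (c : 'I_(d r)) : Wp a *m Vp c = W a *m V c.
Proof.
apply/matrixP => i j; rewrite !mxE big_ord1 sum_ord0 => [|k /negbTE nk].
  by rewrite !mxE !eqxx.
by rewrite !mxE nk mul0r.
Qed.

Lemma VpWp_entry s r (a : 'I_(d s)) (c : 'I_(d r)) i j :
  (Vp a *m Wp c) i j = if (i == ord0) && (j == ord0) then (V a *m W c) 0 0 else 0.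
Proof. by rewrite Vp_mul_entry mul_Wp_entry; case: (i == ord0). Qed.

Lemma e00Vp s (a : 'I_(d s)) : e00 *m Vp a = Vp a.
Proof.
apply/matrixP => i j; rewrite !mxE sum_ord0 => [|k /negbTE nk].
  by rewrite !mxE !eqxx andbT; case: (i == ord0); rewrite ?mul1r ?mul0r.
by rewrite !mxE nk mulr0.
Qed.

Lemma Wpe00 s (a : 'I_(d s)) : Wp a *m e00 = Wp a.
Proof.
apply/matrixP => i j; rewrite !mxE sum_ord0 => [|k /negbTE nk].
  by rewrite !mxE !eqxx /=; case: (j == ord0); rewrite ?mulr1 ?mulr0.
by rewrite !mxE nk mul0r.
Qed.

Lemma WV_entry s r (a : 'I_(d s)) (c : 'I_(d r)) i l :
  (W a *m V c) i l = W a i 0 * V c 0 l.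
Proof. by rewrite mxE big_ord1. Qed.

(* Where a padded
   matrix has a zero row or column the bracket vanishes since br 0 _ = 0. *)
Ltac split_generators := move=> i j k l;
  have [hXX [hYY [hXY [hXW [hXV [hYW [hYV [hVV [hWW hVW]]]]]]]]] := hgen.

Lemma br_X_X s r : brackets (X s) (X r)
  (tensor_of [:: (h * dl (r == zpred s), X r *m X s, 1%:M);
                 (- (h * dl (r == zsucc s)), 1%:M, X s *m X r)]).
Proof.
split_generators; rewrite hXX; expand_terms.
have /= E1 := dl_subst r (zpred s) (fun t => (X t *m X s) k j).
have /= E2 := dl_subst r (zsucc s) (fun t => (X s *m X t) i l).
by ring: E1 E2.
Qed.

Lemma br_Y_Y s r : brackets (Y s) (Y r)
  (tensor_of [:: (h * dl (r == zpred s), 1%:M, Y s *m Y r);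
                 (- (h * dl (r == zsucc s)), Y r *m Y s, 1%:M)]).
Proof.
split_generators; rewrite hYY; expand_terms.
have /= E1 := dl_subst r (zpred s) (fun t => (Y s *m Y t) i l).
have /= E2 := dl_subst r (zsucc s) (fun t => (Y t *m Y s) k j).
by ring: E1 E2.
Qed.

(* The unhalved term d_kj d_il of {X, Y} is split into two halves. *)
Lemma br_X_Y s r : brackets (X s) (Y r)
  (tensor_of [:: (h * dl (r == s), 1%:M, 1%:M); (h * dl (r == s), 1%:M, 1%:M);
                 (h * dl (r == s), Y r *m X s, 1%:M);
                 (h * dl (r == s), 1%:M, X s *m Y r);
                 (- (h * dl (r == zpred s)), X s, Y r);
                 (h * dl (r == zsucc s), Y r, X s)]).
Proof.
split_generators; rewrite hXY; expand_terms.
rewrite {1}[dl (k == j) * dl (i == l)]half_twice.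
have /= E3 := dl_subst r (zpred s) (fun t => Y t i l).
have /= E4 := dl_subst r (zsucc s) (fun t => Y t k j).
case: (eqVneq r s) => [rs|_]; rewrite ?dl_true ?dl_false; last by ring: E3 E4.
by subst r; ring: E3 E4.
Qed.

Lemma br_Y_X s r : brackets (Y s) (X r)
  (tensor_of [:: (- (h * dl (r == s)), 1%:M, 1%:M); (- (h * dl (r == s)), 1%:M, 1%:M);
                 (- (h * dl (r == s)), 1%:M, Y s *m X r);
                 (- (h * dl (r == s)), X r *m Y s, 1%:M);
                 (h * dl (r == zsucc s), Y s, X r);
                 (- (h * dl (r == zpred s)), X r, Y s)]).
Proof.
split_generators.
rewrite (br_antisym hbr) hXY (eq_zpred r s) (eq_zsucc r s) [s == r]eq_sym; expand_terms.
rewrite [dl (i == l) * dl (k == j)]half_twice.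
have /= E3 := dl_subst r (zsucc s) (fun t => Y (zpred t) k j); rewrite ordSK in E3.
have /= E4 := dl_subst r (zpred s) (fun t => Y (zsucc t) i l); rewrite ord_predK in E4.
case: (eqVneq r s) => [rs|_]; rewrite ?dl_true ?dl_false; last by ring: E3 E4.
by subst r; ring: E3 E4.
Qed.

Lemma br_X_W s r (c : 'I_(d r)) : brackets (X s) (Wp c)
  (tensor_of [:: (h * dl (r == zsucc s), 1%:M, X s *m Wp c);
                 (- (h * dl (r == s)), X s, Wp c)]).
Proof.
split_generators; expand_terms; rewrite !Wp_entry !mul_Wp_entry.
case: (eqVneq l ord0) => _ /=; last by rewrite (br0r hbr); ring.
by rewrite hXW [s == r]eq_sym; ring.
Qed.

Lemma br_X_V s r (c : 'I_(d r)) : brackets (X s) (Vp c)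
  (tensor_of [:: (h * dl (r == s), Vp c *m X s, 1%:M);
                 (- (h * dl (r == zsucc s)), Vp c, X s)]).
Proof.
split_generators; expand_terms; rewrite !Vp_entry !Vp_mul_entry.
case: (eqVneq k ord0) => _ /=; last by rewrite (br0r hbr); ring.
by rewrite hXV [s == r]eq_sym; ring.
Qed.

Lemma br_Y_W s r (c : 'I_(d r)) : brackets (Y s) (Wp c)
  (tensor_of [:: (h * dl (r == s), 1%:M, Y s *m Wp c);
                 (- (h * dl (r == zsucc s)), Y s, Wp c)]).
Proof.
split_generators; expand_terms; rewrite !Wp_entry !mul_Wp_entry.
case: (eqVneq l ord0) => _ /=; last by rewrite (br0r hbr); ring.
by rewrite hYW [s == r]eq_sym; ring.
Qed.

Lemma br_Y_V s r (c : 'I_(d r)) : brackets (Y s) (Vp c)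
  (tensor_of [:: (h * dl (r == zsucc s), Vp c *m Y s, 1%:M);
                 (- (h * dl (r == s)), Vp c, Y s)]).
Proof.
split_generators; expand_terms; rewrite !Vp_entry !Vp_mul_entry.
case: (eqVneq k ord0) => _ /=; last by rewrite (br0r hbr); ring.
by rewrite hYV [s == r]eq_sym; ring.
Qed.

Lemma br_W_X s (a : 'I_(d s)) r : brackets (Wp a) (X r)
  (tensor_of [:: (- (h * dl (r == zpred s)), X r *m Wp a, 1%:M);
                 (h * dl (r == s), Wp a, X r)]).
Proof.
split_generators; expand_terms; rewrite !Wp_entry !mul_Wp_entry.
case: (eqVneq j ord0) => _ /=; last by rewrite (br0l hbr); ring.
by rewrite (br_antisym hbr) hXW (eq_zsucc r s); ring.
Qed.

Lemma br_V_X s (a : 'I_(d s)) r : brackets (Vp a) (X r)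
  (tensor_of [:: (- (h * dl (r == s)), 1%:M, Vp a *m X r);
                 (h * dl (r == zpred s), X r, Vp a)]).
Proof.
split_generators; expand_terms; rewrite !Vp_entry !Vp_mul_entry.
case: (eqVneq i ord0) => _ /=; last by rewrite (br0l hbr); ring.
by rewrite (br_antisym hbr) hXV (eq_zsucc r s); ring.
Qed.

Lemma br_W_Y s (a : 'I_(d s)) r : brackets (Wp a) (Y r)
  (tensor_of [:: (- (h * dl (r == s)), Y r *m Wp a, 1%:M);
                 (h * dl (r == zpred s), Wp a, Y r)]).
Proof.
split_generators; expand_terms; rewrite !Wp_entry !mul_Wp_entry.
case: (eqVneq j ord0) => _ /=; last by rewrite (br0l hbr); ring.
by rewrite (br_antisym hbr) hYW (eq_zsucc r s); ring.
Qed.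

Lemma br_V_Y s (a : 'I_(d s)) r : brackets (Vp a) (Y r)
  (tensor_of [:: (- (h * dl (r == zpred s)), 1%:M, Vp a *m Y r);
                 (h * dl (r == s), Y r, Vp a)]).
Proof.
split_generators; expand_terms; rewrite !Vp_entry !Vp_mul_entry.
case: (eqVneq i ord0) => _ /=; last by rewrite (br0l hbr); ring.
by rewrite (br_antisym hbr) hYV (eq_zsucc r s); ring.
Qed.

Lemma br_V_V s (a : 'I_(d s)) r (c : 'I_(d r)) : brackets (Vp a) (Vp c)
  (tensor_of [:: (- (h * osgn s r), Vp a, Vp c);
                 (- (h * dl (s == r) * osgn a c), Vp c, Vp a);
                 (- (h * dl (s == r) * osgn a c), Vp a, Vp c)]).
Proof.
split_generators; expand_terms; rewrite !Vp_entry.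
case: (eqVneq i ord0) => _ /=; last by rewrite (br0l hbr); ring.
case: (eqVneq k ord0) => _ /=; last by rewrite (br0r hbr); ring.
by rewrite hVV; ring.
Qed.

Lemma br_W_W s (a : 'I_(d s)) r (c : 'I_(d r)) : brackets (Wp a) (Wp c)
  (tensor_of [:: (- (h * osgn s r), Wp c, Wp a);
                 (- (h * dl (s == r) * osgn a c), Wp c, Wp a);
                 (- (h * dl (s == r) * osgn a c), Wp a, Wp c)]).
Proof.
split_generators; expand_terms; rewrite !Wp_entry.
case: (eqVneq j ord0) => _ /=; last by rewrite (br0l hbr); ring.
case: (eqVneq l ord0) => _ /=; last by rewrite (br0r hbr); ring.
by rewrite hWW; ring.
Qed.

(* In {V, W} the unhalved term d_kj appears; in padded form it lives on the
   (0,0) matrix unit e00. *)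
Lemma br_V_W s (a : 'I_(d s)) r (c : 'I_(d r)) : brackets (Vp a) (Wp c)
  (tensor_of [:: (h * osgn s r, Wp c *m Vp a, e00);
                 (h * (dl (s == r) * dl (nat_of_ord a == nat_of_ord c)), 1%:M, e00);
                 (h * (dl (s == r) * dl (nat_of_ord a == nat_of_ord c)), 1%:M, e00);
                 (h * (dl (s == r) * dl (nat_of_ord a == nat_of_ord c)), Wp c *m Vp a, e00);
                 (h * (dl (s == r) * dl (nat_of_ord a == nat_of_ord c)), 1%:M, Vp a *m Wp c);
                 (h * dl (s == r) * osgn a c, 1%:M, Vp a *m Wp c);
                 (h * dl (s == r) * osgn a c, Wp c *m Vp a, e00)]).
Proof.
split_generators; expand_terms.
rewrite !Wp_entry !Vp_entry !e00_entry !VpWp_entry WpVp WV_entry.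
case: (eqVneq i ord0) => _ /=; last by rewrite (br0l hbr); ring.
case: (eqVneq l ord0) => _ /=; last by rewrite (br0r hbr) ?andbF; ring.
by rewrite hVW ?eqxx [X in dl _ * dl _ * (X + _ + _)]half_twice; ring.
Qed.

Lemma br_W_V s (a : 'I_(d s)) r (c : 'I_(d r)) : brackets (Wp a) (Vp c)
  (tensor_of [:: (- (h * osgn r s), e00, Wp a *m Vp c);
                 (- (h * (dl (r == s) * dl (nat_of_ord c == nat_of_ord a))), e00, 1%:M);
                 (- (h * (dl (r == s) * dl (nat_of_ord c == nat_of_ord a))), e00, 1%:M);
                 (- (h * (dl (r == s) * dl (nat_of_ord c == nat_of_ord a))), e00, Wp a *m Vp c);
                 (- (h * (dl (r == s) * dl (nat_of_ord c == nat_of_ord a))), Vp c *m Wp a, 1%:M);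
                 (- (h * dl (r == s) * osgn c a), Vp c *m Wp a, 1%:M);
                 (- (h * dl (r == s) * osgn c a), e00, Wp a *m Vp c)]).
Proof.
split_generators; expand_terms.
rewrite !Wp_entry !Vp_entry !e00_entry !VpWp_entry WpVp WV_entry.
case: (eqVneq j ord0) => _ /=; last by rewrite (br0l hbr) ?andbF; ring.
case: (eqVneq k ord0) => _ /=; last by rewrite (br0r hbr); ring.
by rewrite (br_antisym hbr) hVW ?eqxx [X in dl _ * dl _ * (X + _ + _)]half_twice; ring.
Qed.

Ltac factor_from H1 H2 :=
  apply: (brackets_ext (brackets_1add hbr (brackets_mul hbr H1 H2))) => i j k l;
  expand_terms; rewrite ?mulmxDl ?mulmxDr ?mulmxA ?mulmx1 ?mul1mx ?addmx_entry ?id_entry.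
Ltac ring_cases r s :=
  case: (eqVneq r s) => [<-|_]; rewrite ?dl_true ?dl_false; ring.

Lemma factA_X s r : brackets (1%:M + X s *m Y s) (X r)
  (std (- dl (r == zpred s)) (dl (r == zpred s)) (dl (r == s)) (dl (r == s))
        (1%:M + X s *m Y s) (X r)).
Proof. by factor_from (br_X_X s r) (br_Y_X s r); ring_cases r s. Qed.

Lemma factD_X p r : brackets (1%:M + Y p *m X p) (X r)
  (std (- dl (r == p)) (- dl (r == p)) (dl (r == zsucc p)) (- dl (r == zsucc p))
        (1%:M + Y p *m X p) (X r)).
Proof. by factor_from (br_Y_X p r) (br_X_X p r); ring_cases r p. Qed.

Lemma factE_X s (a : 'I_(d s)) r : brackets (1%:M + Wp a *m Vp a) (X r)
  (std (dl (r == zpred s)) (- dl (r == zpred s)) (dl (r == s)) (- dl (r == s))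
        (1%:M + Wp a *m Vp a) (X r)).
Proof. by factor_from (br_W_X a r) (br_V_X a r); ring. Qed.

Lemma factA_Y s r : brackets (1%:M + X s *m Y s) (Y r)
  (std (dl (r == s)) (dl (r == s)) (- dl (r == zpred s)) (dl (r == zpred s))
        (1%:M + X s *m Y s) (Y r)).
Proof. by factor_from (br_X_Y s r) (br_Y_Y s r); ring_cases r s. Qed.

Lemma factD_Y p r : brackets (1%:M + Y p *m X p) (Y r)
  (std (dl (r == zsucc p)) (- dl (r == zsucc p)) (- dl (r == p)) (- dl (r == p))
        (1%:M + Y p *m X p) (Y r)).
Proof. by factor_from (br_Y_Y p r) (br_X_Y p r); ring_cases r p. Qed.

Lemma factE_Y s (a : 'I_(d s)) r : brackets (1%:M + Wp a *m Vp a) (Y r)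
  (std (dl (r == s)) (- dl (r == s)) (dl (r == zpred s)) (- dl (r == zpred s))
        (1%:M + Wp a *m Vp a) (Y r)).
Proof. by factor_from (br_W_Y a r) (br_V_Y a r); ring. Qed.

Lemma factA_V s r (c : 'I_(d r)) : brackets (1%:M + X s *m Y s) (Vp c)
  (std (- dl (r == s)) (dl (r == s)) 0 0 (1%:M + X s *m Y s) (Vp c)).
Proof. by factor_from (br_X_V s c) (br_Y_V s c); ring. Qed.

Lemma factD_V p r (c : 'I_(d r)) : brackets (1%:M + Y p *m X p) (Vp c)
  (std (- dl (r == zsucc p)) (dl (r == zsucc p)) 0 0 (1%:M + Y p *m X p) (Vp c)).
Proof. by factor_from (br_Y_V p c) (br_X_V p c); ring. Qed.

Lemma factA_W s r (c : 'I_(d r)) : brackets (1%:M + X s *m Y s) (Wp c)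
  (std 0 0 (- dl (r == s)) (dl (r == s)) (1%:M + X s *m Y s) (Wp c)).
Proof. by factor_from (br_X_W s c) (br_Y_W s c); ring. Qed.

Lemma factD_W p r (c : 'I_(d r)) : brackets (1%:M + Y p *m X p) (Wp c)
  (std 0 0 (- dl (r == zsucc p)) (dl (r == zsucc p)) (1%:M + Y p *m X p) (Wp c)).
Proof. by factor_from (br_Y_W p c) (br_X_W p c); ring. Qed.

Lemma osgnC x y : osgn x y = - osgn y x :> A.
Proof. by rewrite /osgn; case: ltngtP; rewrite ?opprK ?oppr0. Qed.

Lemma factE_V s (a : 'I_(d s)) r (c : 'I_(d r)) : brackets (1%:M + Wp a *m Vp a) (Vp c)
  (std (- (dl (r == s) * osgn a c) - dl (r == s) * dl (nat_of_ord a == nat_of_ord c))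
        (dl (r == s) * osgn a c - dl (r == s) * dl (nat_of_ord a == nat_of_ord c)) 0 0
        (1%:M + Wp a *m Vp a) (Vp c)).
Proof.
factor_from (br_W_V a c) (br_V_V a c).
rewrite ?e00Vp (osgnC r s) (osgnC c a) [s == r]eq_sym [nat_of_ord c == _]eq_sym.
case: (eqVneq r s) => [rs|_]; rewrite ?dl_true ?dl_false; last by ring.
subst r; case: (eqVneq (nat_of_ord a) (nat_of_ord c)) => [/val_inj ac|_];
  rewrite ?dl_true ?dl_false; last by ring.
by subst c; ring.
Qed.

Lemma factE_W s (a : 'I_(d s)) r (c : 'I_(d r)) : brackets (1%:M + Wp a *m Vp a) (Wp c)
  (std 0 0 (- (dl (r == s) * dl (nat_of_ord a == nat_of_ord c)) - dl (r == s) * osgn a c)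
        (- (dl (r == s) * dl (nat_of_ord a == nat_of_ord c)) + dl (r == s) * osgn a c)
        (1%:M + Wp a *m Vp a) (Wp c)).
Proof.
factor_from (br_W_W a c) (br_V_W a c).
rewrite ?Wpe00 [s == r]eq_sym.
case: (eqVneq r s) => [rs|_]; rewrite ?dl_true ?dl_false; last by ring.
subst r; case: (eqVneq (nat_of_ord a) (nat_of_ord c)) => [/val_inj ac|_];
  rewrite ?dl_true ?dl_false; last by ring.
by subst c; ring.
Qed.

Definition spin_factor b s (t : 'I_(d s)) : 'M[A]_n :=
  if spin_le_rho t b then invmx (1%:M + Wp t *m Vp t) else 1%:M.

Lemma PhiE b s : Phi X Y V W b s =
  (1%:M + X s *m Y s) *m invmx (1%:M + Y (zpred s) *m X (zpred s)) *m
  \big[mulmx/1%:M]_(t < d s) spin_factor b t.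
Proof.
rewrite /Phi big_mkcond; congr (_ *m _); apply: eq_bigr => t _.
by rewrite /spin_factor WpVp.
Qed.

Lemma Phi_std b s G (alpha beta : nat -> A) x a' y b' :
  brackets (1%:M + X s *m Y s) G (std x a' y b' (1%:M + X s *m Y s) G) ->
  brackets (invmx (1%:M + Y (zpred s) *m X (zpred s))) G
    (std (alpha 0) (- x) (beta 0) (- y)
         (invmx (1%:M + Y (zpred s) *m X (zpred s))) G) ->
  (forall t : 'I_(d s), brackets (spin_factor b t) G
     (std (alpha t.+1) (- alpha t) (beta t.+1) (- beta t) (spin_factor b t) G)) ->
  brackets (Phi X Y V W b s) G
    (std (alpha (d s)) a' (beta (d s)) b' (Phi X Y V W b s) G).
Proof.
by move=> AG DG EG; rewrite PhiE; exact: (std_chain hbr (std_mul hbr AG DG) EG).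
Qed.

Lemma E_pad_unit s (t : 'I_(d s)) : (1%:M + Wp t *m Vp t) \in unitmx.
Proof. by rewrite WpVp. Qed.

Ltac std_from H := apply: (std_congr H); rewrite ?opprK ?ord_predK ?oppr0 //.

(* With X_r and Y_r all the spin factors have the same balanced coefficients. *)
Lemma Phi_X b s r : brackets (Phi X Y V W b s) (X r)
  (std (dl (r == zpred s)) (dl (r == zpred s)) (dl (r == s)) (dl (r == s))
       (Phi X Y V W b s) (X r)).
Proof.
apply: (Phi_std (alpha := fun=> _) (beta := fun=> _) (factA_X s r)).
  by std_from (std_inv hbr (D_unit _) (factD_X (zpred s) r)).
move=> t; rewrite /spin_factor; case: ifP => _; last exact: (std_id hbr).
by std_from (std_inv hbr (E_pad_unit t) (factE_X t r)).
Qed.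

Lemma Phi_Y b s r : brackets (Phi X Y V W b s) (Y r)
  (std (dl (r == s)) (dl (r == s)) (dl (r == zpred s)) (dl (r == zpred s))
       (Phi X Y V W b s) (Y r)).
Proof.
apply: (Phi_std (alpha := fun=> _) (beta := fun=> _) (factA_Y s r)).
  by std_from (std_inv hbr (D_unit _) (factD_Y (zpred s) r)).
move=> t; rewrite /spin_factor; case: ifP => _; last exact: (std_id hbr).
by std_from (std_inv hbr (E_pad_unit t) (factE_Y t r)).
Qed.

(* Along the spins of s, the coefficient of V_(r,c) (or W_(r,c)) in the partial
   products is -e before the spin c and e after it, where e = [r = s]. *)
Definition flip (e : A) (c t : nat) : A := e * (if (t <= c)%N then -1 else 1).

Lemma flip_end r s (c : 'I_(d r)) : flip (dl (r == s)) c (d s) = dl (r == s).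
Proof.
case: (eqVneq r s) => [<-|_]; last by rewrite /flip mul0r.
by rewrite /flip leqNgt ltn_ord mulr1.
Qed.

Lemma spin_le_rho_val b s (t c : 'I_(d s)) :
  nat_of_ord t = c -> spin_le_rho t b = spin_le_rho c b.
Proof. by rewrite /spin_le_rho /spin_pos => ->. Qed.

(* The inverted factor E_(s,t)^-1 shifts the coefficient of V_(r,c) and W_(r,c)
   from flip e c t to flip e c t.+1. *)
Lemma osgn_flip e (t c : nat) :
  - (e * osgn t c) - e * dl (t == c) = flip e c t /\
  e * dl (t == c) - e * osgn t c = flip e c t.+1.
Proof.
rewrite /flip /osgn; case: (ltngtP t c) => _; rewrite ?dl_true ?dl_false; split; ring.
Qed.

(* An excluded spin t of s contributes nothing; it cannot be c itself. *)
Lemma flip_skip b s r (c : 'I_(d r)) (t : 'I_(d s)) :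
  spin_le_rho c b -> ~~ spin_le_rho t b ->
  flip (dl (r == s)) c t.+1 = flip (dl (r == s)) c t.
Proof.
move=> cb tb; case: (eqVneq r s) => [rs|_]; last by rewrite /flip !mul0r.
subst r; rewrite /flip; case: (ltngtP t c) => // tc.
by rewrite (spin_le_rho_val b tc) cb in tb.
Qed.

Lemma Phi_V b s r (c : 'I_(d r)) : spin_le_rho c b ->
  brackets (Phi X Y V W b s) (Vp c)
  (std (dl (r == s)) (dl (r == s)) 0 0 (Phi X Y V W b s) (Vp c)).
Proof.
move=> cb; pose e : A := dl (r == s).
have DV : brackets (invmx (1%:M + Y (zpred s) *m X (zpred s))) (Vp c)
    (std (flip e c 0) (- - e) 0 (- 0)
         (invmx (1%:M + Y (zpred s) *m X (zpred s))) (Vp c)).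
  by std_from (std_inv hbr (D_unit _) (factD_V (zpred s) c)); rewrite /flip mulrN1.
have EV (t : 'I_(d s)) : brackets (spin_factor b t) (Vp c)
    (std (flip e c t.+1) (- flip e c t) 0 (- 0) (spin_factor b t) (Vp c)).
  rewrite /spin_factor; case: ifP => tb.
    have [Et Et1] := osgn_flip e t c.
    by std_from (std_inv hbr (E_pad_unit t) (factE_V t c)); rewrite -?Et -?Et1; ring.
  by rewrite (flip_skip cb (negbT tb)); exact: (std_id hbr).
have PV := Phi_std (alpha := flip e c) (beta := fun=> 0) (factA_V s c) DV EV.
by std_from PV; rewrite flip_end.
Qed.

Lemma Phi_W b s r (c : 'I_(d r)) : spin_le_rho c b ->
  brackets (Phi X Y V W b s) (Wp c)
  (std 0 0 (dl (r == s)) (dl (r == s)) (Phi X Y V W b s) (Wp c)).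
Proof.
move=> cb; pose e : A := dl (r == s).
have DW : brackets (invmx (1%:M + Y (zpred s) *m X (zpred s))) (Wp c)
    (std 0 (- 0) (flip e c 0) (- - e)
         (invmx (1%:M + Y (zpred s) *m X (zpred s))) (Wp c)).
  by std_from (std_inv hbr (D_unit _) (factD_W (zpred s) c)); rewrite /flip mulrN1.
have EW (t : 'I_(d s)) : brackets (spin_factor b t) (Wp c)
    (std 0 (- 0) (flip e c t.+1) (- flip e c t) (spin_factor b t) (Wp c)).
  rewrite /spin_factor; case: ifP => tb.
    have [Et Et1] := osgn_flip e t c.
    by std_from (std_inv hbr (E_pad_unit t) (factE_W t c)); rewrite -?Et -?Et1; ring.
  by rewrite (flip_skip cb (negbT tb)); exact: (std_id hbr).
have PW := Phi_std (alpha := fun=> 0) (beta := flip e c) (factA_W s c) DW EW.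
by std_from PW; rewrite flip_end.
Qed.

(* For c < b, every factor of Phi^(c)_r has brackets of shape (-e, e, e, -e)
   with P = Phi^(b)_s, where e = [r = s]: this follows by antisymmetry from the
   brackets of P with the generators, since every spin used by Phi^(c) is also
   used by Phi^(b). *)
Lemma Phi_Phi b c r s : (c < b)%N ->
  brackets (Phi X Y V W b s) (Phi X Y V W c r)
    (std (dl (r == s)) (dl (r == s)) (dl (r == s)) (dl (r == s))
         (Phi X Y V W b s) (Phi X Y V W c r)).
Proof.
move=> cb; set P := Phi X Y V W b s; pose e : A := dl (r == s).
have XP p := std_swap hbr (Phi_X b s p).
have YP p := std_swap hbr (Phi_Y b s p).
have AP : brackets (1%:M + X r *m Y r) P
    (std (- e) (- - e) e (- e) (1%:M + X r *m Y r) P).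
  have YP' : brackets (Y r) P
      (std (- e) (- - dl (r == zpred s)) e (- dl (r == zpred s)) (Y r) P).
    by std_from (YP r).
  by apply: (std_1add hbr); std_from (std_mul hbr (XP r) YP').
have DP : brackets (invmx (1%:M + Y (zpred r) *m X (zpred r))) P
    (std (- e) (- - e) e (- e) (invmx (1%:M + Y (zpred r) *m X (zpred r))) P).
  have XP' : brackets (X (zpred r)) P
      (std (- dl (zpred r == zpred s)) (- - dl (zpred r == s))
           (dl (zpred r == zpred s)) (- dl (zpred r == s)) (X (zpred r)) P).
    by std_from (XP (zpred r)).
  have YXP : brackets (1%:M + Y (zpred r) *m X (zpred r)) P
      (std (- e) (- - e) e (- e) (1%:M + Y (zpred r) *m X (zpred r)) P).
    by apply: (std_1add hbr); std_from (std_mul hbr (YP (zpred r)) XP');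
      rewrite (inj_eq (@ord_pred_inj m)).
  by std_from (std_inv hbr (D_unit _) YXP).
have EP (t : 'I_(d r)) : brackets (spin_factor c t) P
    (std (- e) (- - e) e (- e) (spin_factor c t) P).
  rewrite /spin_factor; case: ifP => tc; last exact: (std_id hbr).
  have tb : spin_le_rho t b by apply: leq_trans tc (ltnW cb).
  have VP' : brackets (Vp t) P (std (- e) (- - 0) e (- 0) (Vp t) P).
    by std_from (std_swap hbr (Phi_V s tb)).
  have WVP : brackets (1%:M + Wp t *m Vp t) P
      (std (- e) (- - e) e (- e) (1%:M + Wp t *m Vp t) P).
    have WP := std_swap hbr (Phi_W s tb).
    by apply: (std_1add hbr); std_from (std_mul hbr WP VP').
  by std_from (std_inv hbr (E_pad_unit t) WVP).
have PP := Phi_std (alpha := fun=> - e) (beta := fun=> e) AP DP EP.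
by std_from (std_swap hbr PP).
Qed.

End Model.

Theorem lemma3p7
  (A : comUnitRingType) (two_unit : (2%:R : A) \is a GRing.unit)
  (m n : nat) (hm : (2 <= m)%N) (hn : (1 <= n)%N)
  (d : 'I_m -> nat) (hd0 : forall t : 'I_m, nat_of_ord t = 0%N -> (1 <= d t)%N)
  (X Y : 'I_m -> 'M[A]_n)
  (V : forall s : 'I_m, 'I_(d s) -> 'rV[A]_n)
  (W : forall s : 'I_m, 'I_(d s) -> 'cV[A]_n)
  (hM : in_Mbullet X Y V W)
  (br : A -> A -> A)
  (hbr : antisym_biderivation br)
  (hgen : qP_brackets X Y V W br)
  (b : nat) (hb : (b <= dsum d)%N) :
  (forall (r s : 'I_m) (i j k l : 'I_n),
     br (Phi X Y V W b s i j) (X r k l) =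
       halfA * dl (zsucc r == s) *
         (X r k j * Phi X Y V W b s i l + (X r *m Phi X Y V W b s) k j * dl (i == l))
     - halfA * dl (r == s) *
         (dl (k == j) * (Phi X Y V W b s *m X r) i l + Phi X Y V W b s k j * X r i l)) /\
  (forall (r s : 'I_m) (i j k l : 'I_n),
     br (Phi X Y V W b s i j) (Y r k l) =
       halfA * dl (r == s) *
         (Y r k j * Phi X Y V W b s i l + (Y r *m Phi X Y V W b s) k j * dl (i == l))
     - halfA * dl (zsucc r == s) *
         (dl (k == j) * (Phi X Y V W b s *m Y r) i l + Phi X Y V W b s k j * Y r i l)) /\
  (forall (s r : 'I_m) (c : 'I_(d r)), spin_le_rho c b ->
   forall (i j l : 'I_n),
     br (Phi X Y V W b s i j) (V r c 0 l) =
       halfA * dl (r == s) *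
         (V r c 0 j * Phi X Y V W b s i l + (V r c *m Phi X Y V W b s) 0 j * dl (i == l))) /\
  (forall (s r : 'I_m) (c : 'I_(d r)), spin_le_rho c b ->
   forall (i j k : 'I_n),
     br (Phi X Y V W b s i j) (W r c k 0) =
     - halfA * dl (r == s) *
         (dl (k == j) * (Phi X Y V W b s *m W r c) i 0 + Phi X Y V W b s k j * W r c i 0)) /\
  (forall (c : nat), (c < b)%N -> forall (r s : 'I_m) (i j k l : 'I_n),
     br (Phi X Y V W b s i j) (Phi X Y V W c r k l) =
       halfA * dl (r == s) *
         (Phi X Y V W c r k j * Phi X Y V W b s i l
          + (Phi X Y V W c r *m Phi X Y V W b s) k j * dl (i == l))
     - halfA * dl (r == s) *
         (dl (k == j) * (Phi X Y V W b s *m Phi X Y V W c r) i l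
          + Phi X Y V W b s k j * Phi X Y V W c r i l)).
Proof.
case: n hn X Y V W hM hgen => [//|n'] _ X Y V W hM hgen.
have [_ [YX_unit [WV_unit _]]] := hM.
have PhiX := Phi_X two_unit hbr hgen YX_unit WV_unit b.
have PhiY := Phi_Y two_unit hbr hgen YX_unit WV_unit b.
split; [|split; [|split; [|split]]].
- move=> r s i j k l; rewrite PhiX std_entry [zsucc r == s]eq_sym eq_zsucc; ring.
- move=> r s i j k l; rewrite PhiY std_entry [zsucc r == s]eq_sym eq_zsucc; ring.
- move=> s r c cb i j l.
  have := Phi_V two_unit hbr hgen YX_unit WV_unit s cb i j ord0 l.
  by rewrite Vp_entry eqxx => ->; rewrite std_entry Vp_entry Vp_mul_entry eqxx; ring.
- move=> s r c cb i j k.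
  have := Phi_W two_unit hbr hgen YX_unit WV_unit s cb i j k ord0.
  by rewrite Wp_entry eqxx => ->; rewrite std_entry !Wp_entry !mul_Wp_entry eqxx; ring.
- move=> c cb r s i j k l.
  by rewrite (Phi_Phi two_unit hbr hgen YX_unit WV_unit r s cb) std_entry; ring.
Qed.
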